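(* Let $G=(F\cup C,E)$ be a finite bipartite graph with $F\neq\emptyset$ and no isolated vertices. In one iteration of FacilitySelect on $G$, the expected number of edges removed is at least $\max\{|F|,\,|E|/|F|\}$.
   Context: Let $G=(F\cup C,E)$ be a finite bipartite graph with parts $F$ (facilities) and $C$ (clients). The facility graph $G_F=(F,E_F)$ has an edge $\{i,i'\}$ ($i\ne i'$) iff $i$ and $i'$ have a common neighbor in $G$. Write $\deg(\cdot)$, $N(\cdot)$ for degree/neighborhood in $G$, $\deg_F(\cdot)$, $N_F(\cdot)$ for those in $G_F$. One iteration of FacilitySelect: every $i\in F$ independently draws $r_i$ uniformly from $[0,1]$; let $I=\{i\in F: r_i>\max_{i'\in N_F(i)} r_{i'}\}$ (the maximum over the empty set being $-\infty$); then all vertices of $I\cup N(I)$ are deleted from $G$ together with all their incident edges. ''Clients removed'' are the clients in $N(I)$; ''edges removed'' are the edges incident to deleted vertices. FacilitySelect repeats iterations while $F\ne\emptyset$. *)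

From HB Require Import structures.
From mathcomp Require Import all_boot all_order all_algebra all_fingroup.
Set Implicit Arguments. Unset Strict Implicit. Unset Printing Implicit Defensive.
Import Order.TTheory GRing.Theory Num.Theory.

Section FS.
Variables (F C : finType) (adj : F -> C -> bool).

Definition edges : {set F * C} := [set e | adj e.1 e.2].

Definition nbrF (i : F) : {set C} := [set c | adj i c].
Definition nbrC (c : C) : {set F} := [set i | adj i c].

Definition fadj (i i' : F) : bool := (i != i') && [exists c, adj i c && adj i' c].
Definition nbrFF (i : F) : {set F} := [set i' | fadj i i'].

Definition no_isolated : Prop :=
  (forall i : F, exists c, adj i c) /\ (forall c : C, exists i, adj i c).

(* Since the r_i are i.i.d. continuous, ties have probability 0 and the
   relative order of the r_i is a uniformly random ranking of F. *)
Definition rk (s : {perm F}) (i : F) : nat := enum_rank (s i).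

Definition selected (s : {perm F}) : {set F} :=
  [set i | [forall i', (i' \in nbrFF i) ==> (rk s i' < rk s i)%N]].

Definition removed_clients (s : {perm F}) : {set C} :=
  [set c | [exists i, (i \in selected s) && adj i c]].

Definition removed_edges (s : {perm F}) : {set F * C} :=
  [set e in edges | (e.1 \in selected s) || (e.2 \in removed_clients s)].

Definition expected_removed_edges : rat :=
  ((\sum_(s : {perm F}) #|removed_edges s|)%:R / (#|F|`!)%:R)%R.

End FS.

From HB Require Import structures.
From mathcomp Require Import all_boot all_order all_algebra all_fingroup.
Import Order.TTheory GRing.Theory Num.Theory.

(* A facility i is selected exactly when it tops its closed neighbourhood
   K(i) = {i} ∪ N_F(i) in the ranking, and by symmetry this happens for at
   least a 1/|K(i)| fraction of the rankings.  Once i is selected, all edges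
   at the clients of N(i) are removed; these edge sets are disjoint for
   distinct selected facilities, since those are not adjacent in G_F.  There
   are at least |K(i)| such edges (every G_F-neighbour of i shares a client
   with it) and at least deg(i) of them, so the expected number of removed
   edges is at least the sum over i of 1, i.e. |F|, and at least the sum of
   deg(i)/|F|, i.e. |E|/|F|. *)

Set Implicit Arguments.
Unset Strict Implicit.
Unset Printing Implicit Defensive.

Lemma sum_card_disjoint_le (I X : finType) (J : {pred I}) (A : I -> {set X}) (B : {set X}) :
  {in J &, forall i j, i != j -> [disjoint A i & A j]} ->
  {in J, forall i, A i \subset B} ->
  (\sum_(i in J) #|A i| <= #|B|)%N.
Proof.
move=> disjA subAB; rewrite -sum1_card.
under eq_bigr => i _ do rewrite -sum1_card.
rewrite (exchange_big_dep (mem B)) /=; last by move=> i x /subAB/subsetP; apply.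
apply: leq_sum => x _; rewrite sum1dep_card; apply/card_le1_eqP => i j.
rewrite !inE => /andP[iJ xAi] /andP[jJ xAj]; apply/eqP; apply: contraTT xAi => ji.
by rewrite (disjointFr (disjA j i jJ iJ ji) xAj).
Qed.

Section Rankings.
Variable T : finType.

Lemma rk_inj (s : {perm T}) : injective (rk s).
Proof. by move=> x y /ord_inj /enum_rank_inj /perm_inj. Qed.

Lemma card_perm_type : #|{perm T}| = #|T|`!.
Proof.
rewrite -cardsT -card_perm; apply: eq_card => s.
by rewrite !inE; symmetry; apply/subsetP => x _; rewrite inE.
Qed.

Definition ranked_top (A : {set T}) (j : T) : {set {perm T}} :=
  [set s | [forall x in A, (x != j) ==> (rk s x < rk s j)%N]].

(* Composing with the transposition (a b) turns a ranking topped by a into one topped by b. *)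
Lemma card_ranked_top_le (A : {set T}) a b :
  b \in A -> (#|ranked_top A a| <= #|ranked_top A b|)%N.
Proof.
move=> bA; rewrite -(card_imset _ (mulgI (tperm a b))); apply: subset_leq_card.
apply/subsetP => _ /imsetP[s sa ->]; rewrite inE; apply/forall_inP => x xA.
have rkE y : rk (tperm a b * s) y = rk s (tperm a b y) by rewrite /rk permM.
rewrite !rkE tpermR; apply/implyP => xb.
have [txA txa] : tperm a b x \in A /\ tperm a b x != a.
  case: tpermP => [xa | xb' | /eqP xa _]; last by [].
  - by split=> //; apply: contra xb => /eqP ba; rewrite xa ba.
  - by rewrite xb' eqxx in xb.
by move: sa; rewrite inE => /forall_inP/(_ _ txA); rewrite txa.
Qed.

Lemma card_perm_le_ranked_top (A : {set T}) i :
  i \in A -> (#|{perm T}| <= #|A| * #|ranked_top A i|)%N.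
Proof.
move=> iA; rewrite -sum_nat_const; apply: (@leq_trans (\sum_(j in A) #|ranked_top A j|)).
  rewrite -sum1_card; under [X in (_ <= X)%N]eq_bigr => j _ do rewrite -sum1_card.
  rewrite (exchange_big_dep predT) //=; apply: leq_sum => s _.
  rewrite sum1dep_card card_gt0; apply/set0Pn.
  case: (arg_maxnP (rk s) iA) => j jA jmax; exists j; rewrite !inE; apply/andP; split=> //.
  apply/forall_inP => x xA; apply/implyP => xj.
  have xlej : (rk s x <= rk s j)%N := jmax x xA.
  by rewrite ltn_neqAle xlej andbT; apply: contra xj => /eqP/rk_inj ->.
by apply: leq_sum => j _; apply: card_ranked_top_le.
Qed.

End Rankings.

Section FacilitySelect.
Variables (F C : finType) (adj : F -> C -> bool).

Lemma fadj_sym i j : fadj adj i j = fadj adj j i.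
Proof.
by rewrite /fadj eq_sym; congr (_ && _); apply/existsP/existsP => -[c /andP[? ?]];
  exists c; apply/andP.
Qed.

Lemma selected_nfadj s i j :
  i \in selected adj s -> j \in selected adj s -> ~~ fadj adj i j.
Proof.
rewrite !inE => /forallP/(_ j) ij /forallP/(_ i) ji; apply/negP => fij.
move: ij ji; rewrite !inE fij fadj_sym fij /= => ij ji.
by have := ltn_trans ij ji; rewrite ltnn.
Qed.

Definition cnbrFF (i : F) : {set F} := i |: nbrFF adj i.

Definition selecting (i : F) : {set {perm F}} := [set s | i \in selected adj s].

Lemma selecting_ranked_top i : selecting i = ranked_top (cnbrFF i) i.
Proof.
apply/setP => s; rewrite !inE; apply/forallP/forall_inP => [sel x | top x].
  rewrite in_setU1 => /orP[/eqP -> | xi]; first by rewrite eqxx.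
  by move: (sel x) => /implyP/(_ xi) ->; rewrite implybT.
apply/implyP => xi; apply: (implyP (top x _)); first by rewrite in_setU1 xi orbT.
by move: xi; rewrite inE /fadj eq_sym => /andP[].
Qed.

Lemma card_perm_le_selected i :
  (#|{perm F}| <= #|cnbrFF i| * #|selecting i|)%N.
Proof. by rewrite selecting_ranked_top card_perm_le_ranked_top // !inE eqxx. Qed.

Definition nbrF_edges (i : F) : {set F * C} := [set e in edges adj | e.2 \in nbrF adj i].

Lemma nbrF_edges_disjoint s i j : i \in selected adj s -> j \in selected adj s ->
  i != j -> [disjoint nbrF_edges i & nbrF_edges j].
Proof.
move=> si sj ij; apply/pred0P => e /=; apply/negP.
rewrite !inE => /andP[/andP[_ ie] /andP[_ je]].
have/negP := selected_nfadj si sj; apply; rewrite /fadj ij; apply/existsP.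
by exists e.2; rewrite ie je.
Qed.

Lemma nbrF_edges_sub_removed s i :
  i \in selected adj s -> nbrF_edges i \subset removed_edges adj s.
Proof.
move=> si; apply/subsetP => e; rewrite !inE => /andP[e_adj ie].
by rewrite e_adj; apply/orP; right; apply/existsP; exists i; rewrite si ie.
Qed.

Lemma sum_nbrF_edges_le_removed s :
  (\sum_(i in selected adj s) #|nbrF_edges i| <= #|removed_edges adj s|)%N.
Proof.
apply: sum_card_disjoint_le => [i j si sj | i si].
  exact: (nbrF_edges_disjoint si sj).
exact: (nbrF_edges_sub_removed si).
Qed.

Lemma card_nbrF_le_nbrF_edges i : (#|nbrF adj i| <= #|nbrF_edges i|)%N.
Proof.
have pair_inj : injective (pair i : C -> F * C) by move=> c c' [].
rewrite -(card_imset _ pair_inj); apply/subset_leq_card/subsetP => e /imsetP[c].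
by rewrite !inE => ic ->; rewrite /= ic.
Qed.

Lemma card_cnbrFF_le_nbrF_edges i c0 : adj i c0 -> (#|cnbrFF i| <= #|nbrF_edges i|)%N.
Proof.
(* Each member j of the closed neighbourhood is charged the edge from j to a client it shares with i. *)
move=> ic0; pose common j := odflt c0 [pick c | adj i c && adj j c].
have pair_inj : injective (fun j => (j, common j)) by move=> x y [].
rewrite -(card_imset _ pair_inj); apply/subset_leq_card/subsetP => e /imsetP[j jK ->].
rewrite !inE /common; case: pickP => [c /andP[ic jc] | nocommon] /=; first by rewrite ic jc.
move: jK; rewrite in_setU1 => /orP[/eqP -> | ]; first by rewrite ic0.
rewrite inE => /andP[_ /existsP[c /andP[ic jc]]].
by have := nocommon c; rewrite ic jc.
Qed.

Lemma card_edges_sum : #|edges adj| = \sum_i #|nbrF adj i|.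
Proof.
rewrite -sum1_card; under [RHS]eq_bigr => i _ do rewrite -sum1_card.
by rewrite pair_big_dep /=; apply: eq_bigl => -[i c]; rewrite !inE.
Qed.

Lemma sum_nbrF_edges_selecting_le :
  (\sum_i #|nbrF_edges i| * #|selecting i| <= \sum_s #|removed_edges adj s|)%N.
Proof.
apply: (@leq_trans (\sum_s \sum_(i in selected adj s) #|nbrF_edges i|)).
  rewrite (exchange_big_dep predT) //=; apply/eq_leq/eq_bigr => i _.
  by rewrite sum_nat_cond_const mulnC.
by apply: leq_sum => s _; apply: sum_nbrF_edges_le_removed.
Qed.

Lemma card_F_perm_le_removed : no_isolated adj ->
  (#|F| * #|{perm F}| <= \sum_s #|removed_edges adj s|)%N.
Proof.
case=> nbrF_n0 _; apply: leq_trans _ sum_nbrF_edges_selecting_le.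
rewrite -sum_nat_const; apply: leq_sum => i _.
have [c ic] := nbrF_n0 i.
apply: leq_trans (card_perm_le_selected i) _.
by rewrite leq_mul2r (card_cnbrFF_le_nbrF_edges ic) orbT.
Qed.

Lemma card_edges_perm_le_removed :
  (#|edges adj| * #|{perm F}| <= #|F| * \sum_s #|removed_edges adj s|)%N.
Proof.
rewrite card_edges_sum big_distrl.
apply: leq_trans _ (leq_mul (leqnn _) sum_nbrF_edges_selecting_le).
rewrite big_distrr; apply: leq_sum => i _ /=.
apply: leq_trans (leq_mul (leqnn _) (card_perm_le_selected i)) _.
rewrite !mulnA leq_mul2r [#|F| * _]mulnC; apply/orP; right.
exact: leq_mul (card_nbrF_le_nbrF_edges i) (max_card _).
Qed.

End FacilitySelect.

Theorem lemma4 (F C : finType) (adj : F -> C -> bool) :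
  (0 < #|F|)%N ->
  no_isolated adj ->
  (Num.max (#|F|%:R : rat) (#|edges adj|%:R / #|F|%:R) <= expected_removed_edges adj)%R.
Proof.
move=> F_gt0 no_iso; rewrite /expected_removed_edges -card_perm_type.
have perm_gt0 : (0 < #|{perm F}|)%N by rewrite card_perm_type fact_gt0.
rewrite ge_max !ler_pdivlMr ?ltr0n // mulrAC ler_pdivrMr ?ltr0n // -!natrM !ler_nat.
by rewrite card_F_perm_le_removed // [(_ * #|F|)%N]mulnC card_edges_perm_le_removed.
Qed.
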